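(* Let $S$ be a rectangular domain, $\bar\eta$ a flow field on $\mathbb{E}(\bar S)$, and $\ell,\ell'\subseteq\bar S$ broken traces with $w_\eta(\ell)>0$ and $w_\eta(\ell')>0$. Then $\ell\succeq\ell'$ or $\ell'\succeq\ell$.
   Context: Lattice and edges. $\tilde{\mathbb{Z}}^2=\{(t,x)\in\mathbb{Z}^2:t+x\text{ even}\}$; edges $\langle y,y'\rangle$ join points at distance $\sqrt2$. For $y=(t,x)$: - $e^\nearrow_y=\langle(t,x),(t+1,x+1)\rangle$, - $e^\searrow_y=\langle(t,x),(t+1,x-1)\rangle$, - $e^\swarrow_y=\langle(t-1,x-1),(t,x)\rangle$, - $e^\nwarrow_y=\langle(t-1,x+1),(t,x)\rangle$. Domains. A rectangular domain is a nonempty set $S=\{(t,x)\in\tilde{\mathbb{Z}}^2: a\le t+x\le b,\ c\le t-x\le d\}$ with even integers $a\le b$, $c\le d$. $\bar S$ is $S$ together with all points joined by an edge to a point of $S$; $\partial\bar S=\bar S\setminus S$; $\mathbb{E}(\bar S)$ is the set of edges with at least one endpoint in $S$. Flow field. A flow field is $\eta(e)\ge0$, $e\in\mathbb{E}(\bar S)$, with $\eta(e^\nwarrow_y)+\eta(e^\nearrow_y)=\eta(e^\swarrow_y)+\eta(e^\searrow_y)$ for all $y\in S$; its birth field is $\xi_y=\eta(e^\nearrow_y)\wedge\eta(e^\searrow_y)$. Association. For $y\in S$, a lower edge $f_1\in\{e^\swarrow_y,e^\searrow_y\}$ with $p_1\in(0,\eta(f_1)]$, and an upper edge $f_2\in\{e^\nwarrow_y,e^\nearrow_y\}$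 with $p_2\in(0,\eta(f_2)]$, write $(f_1,p_1)\sim_y(f_2,p_2)$ exactly when: - Case 1: $f_1=e^\swarrow_y$, $f_2=e^\nwarrow_y$, $p_1\le\eta(f_1)\wedge\eta(f_2)$, $p_2=p_1$; - Case 2: $f_1=e^\searrow_y$, $f_2=e^\nwarrow_y$, $p_2>\eta(e^\swarrow_y)$, $p_1=p_2-\eta(e^\swarrow_y)$; - Case 3: $f_1=e^\swarrow_y$, $f_2=e^\nearrow_y$, $p_1>\eta(e^\nwarrow_y)$, $p_2=p_1-\eta(e^\nwarrow_y)$; - Case 4: $f_1=e^\searrow_y$, $f_2=e^\nearrow_y$, $p_i>\eta(f_i)-\xi_y$ ($i=1,2$), $\eta(f_1)-p_1=\eta(f_2)-p_2$. Broken traces. A broken trace is $\ell=(y_0,e_1,y_1,\dots,e_n,y_n)$, $n\ge1$, with $y_i=(t_i,x_i)\in\tilde{\mathbb{Z}}^2$, $e_i=\langle y_{i-1},y_i\rangle$, $x_i=x_{i-1}+1$, $t_i-t_{i-1}\in\{-1,1\}$. - $D(\ell)=\{x_0,\dots,x_n\}$, and $t_\ell(x)$ is the $t$-coordinate of the vertex of $\ell$ at second coordinate $x$. - $\ell\subseteq\bar S$ means $y_0,y_n\in\bar S$, $y_1,\dots,y_{n-1}\in S$, all $e_i\in\mathbb{E}(\bar S)$. Weight. $w_\eta(\ell)$ is the Lebesgue measure of the set of $p_1\in(0,\eta(e_1)]$ for which there exist $p_i\in(0,\eta(e_i)]$ ($i=2,\dots,n$) with $(e_{i-1},p_{i-1})\sim_{y_{i-1}}(e_i,p_i)$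 for all $i=2,\dots,n$. Order. $\ell\succeq\ell'$ means that $t_\ell(x)\ge t_{\ell'}(x)$ for all $x\in D(\ell)\cap D(\ell')$, and that $t_\ell(x)\ge t_{\ell'}(x')$ for some $x\in D(\ell)$, $x'\in D(\ell')$. *)

From Stdlib Require Import Reals ZArith.
Open Scope R_scope.

(* Points of Z^2 as (t, x). *)
Definition point : Type := (Z * Z)%type.
(* An edge <y,y'> (|t-t'| = |x-x'| = 1) is stored canonically as the pair
   (lower-time endpoint, higher-time endpoint). *)
Definition edge : Type := (point * point)%type.

Definition in_lattice (y : point) : Prop := Z.Even (fst y + snd y)%Z.

Definition mkedge (a b : point) : edge :=
  if (fst a <? fst b)%Z then (a, b) else (b, a).

Definition e_ne (y : point) : edge := (y, (fst y + 1, snd y + 1)%Z).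
Definition e_se (y : point) : edge := (y, (fst y + 1, snd y - 1)%Z).
Definition e_sw (y : point) : edge := ((fst y - 1, snd y - 1)%Z, y).
Definition e_nw (y : point) : edge := ((fst y - 1, snd y + 1)%Z, y).

Definition rect_dom (a b c d : Z) (y : point) : Prop :=
  in_lattice y /\
  (a <= fst y + snd y <= b)%Z /\ (c <= fst y - snd y <= d)%Z.

Definition adjacent (y y' : point) : Prop :=
  (Z.abs (fst y - fst y') = 1 /\ Z.abs (snd y - snd y') = 1)%Z.

Definition closure (S : point -> Prop) (y : point) : Prop :=
  S y \/ exists y', S y' /\ in_lattice y /\ adjacent y y'.

Definition in_edges (S : point -> Prop) (e : edge) : Prop :=
  S (fst e) \/ S (snd e).

Definition flow_field (S : point -> Prop) (eta : edge -> R) : Prop :=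
  (forall e, in_edges S e -> 0 <= eta e) /\
  (forall y, S y -> eta (e_nw y) + eta (e_ne y) = eta (e_sw y) + eta (e_se y)).

Definition birth (eta : edge -> R) (y : point) : R :=
  Rmin (eta (e_ne y)) (eta (e_se y)).

Definition assoc (eta : edge -> R) (y : point) (f1 : edge) (p1 : R)
  (f2 : edge) (p2 : R) : Prop :=
  (f1 = e_sw y \/ f1 = e_se y) /\ 0 < p1 <= eta f1 /\
  (f2 = e_nw y \/ f2 = e_ne y) /\ 0 < p2 <= eta f2 /\
  ( (f1 = e_sw y /\ f2 = e_nw y /\ p1 <= Rmin (eta f1) (eta f2) /\ p2 = p1)
 \/ (f1 = e_se y /\ f2 = e_nw y /\ p2 > eta (e_sw y) /\ p1 = p2 - eta (e_sw y))
 \/ (f1 = e_sw y /\ f2 = e_ne y /\ p1 > eta (e_nw y) /\ p2 = p1 - eta (e_nw y))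
 \/ (f1 = e_se y /\ f2 = e_ne y /\ p1 > eta f1 - birth eta y /\
     p2 > eta f2 - birth eta y /\ eta f1 - p1 = eta f2 - p2) ).

(* Broken trace: y_i = (tr_t i, tr_x0 + i), i = 0..tr_n. *)
Record trace : Type := Trace { tr_x0 : Z; tr_n : nat; tr_t : nat -> Z }.

Definition vert (l : trace) (i : nat) : point :=
  (tr_t l i, (tr_x0 l + Z.of_nat i)%Z).

Definition is_trace (l : trace) : Prop :=
  (1 <= tr_n l)%nat /\
  (forall i, (i <= tr_n l)%nat -> in_lattice (vert l i)) /\
  (forall i, (i < tr_n l)%nat ->
     (tr_t l (S i) - tr_t l i = 1 \/ tr_t l (S i) - tr_t l i = -1)%Z).

(* e_i = <y_{i-1}, y_i>, i = 1..n *)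
Definition tr_edge (l : trace) (i : nat) : edge :=
  mkedge (vert l (i - 1)) (vert l i).

Definition dom (l : trace) (x : Z) : Prop :=
  (tr_x0 l <= x <= tr_x0 l + Z.of_nat (tr_n l))%Z.

Definition t_at (l : trace) (x : Z) : Z := tr_t l (Z.to_nat (x - tr_x0 l)).

Definition trace_in (S : point -> Prop) (l : trace) : Prop :=
  closure S (vert l 0) /\ closure S (vert l (tr_n l)) /\
  (forall i, (1 <= i < tr_n l)%nat -> S (vert l i)) /\
  (forall i, (1 <= i <= tr_n l)%nat -> in_edges S (tr_edge l i)).

(* The set whose Lebesgue measure is w_eta(l). *)
Definition weight_set (eta : edge -> R) (l : trace) (p1 : R) : Prop :=
  0 < p1 <= eta (tr_edge l 1) /\
  exists p : nat -> R, p 1%nat = p1 /\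
    (forall i, (2 <= i <= tr_n l)%nat -> 0 < p i <= eta (tr_edge l i)) /\
    (forall i, (2 <= i <= tr_n l)%nat ->
       assoc eta (vert l (i - 1)) (tr_edge l (i - 1)) (p (i - 1)%nat)
             (tr_edge l i) (p i)).

(* "A has positive Lebesgue (outer) measure": there is eps > 0 such that
   every countable cover of A by open intervals (a n, b n) has total length
   at least eps (witnessed by some partial sum). *)
Definition positive_measure (A : R -> Prop) : Prop :=
  exists eps, 0 < eps /\
    forall a b : nat -> R,
      (forall n, a n <= b n) ->
      (forall x, A x -> exists n, a n < x < b n) ->
      exists N, eps <= sum_f_R0 (fun n => b n - a n) N.

Definition trace_ge (l l' : trace) : Prop :=
  (forall x, dom l x -> dom l' x -> (t_at l' x <= t_at l x)%Z) /\
  (exists x x', dom l x /\ dom l' x' /\ (t_at l' x' <= t_at l x)%Z).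

From Stdlib Require Import Reals ZArith Lia Lra Classical.
Open Scope R_scope.

(* A set of positive measure is nonempty, so a trace of positive weight carries
   a labelling: the edge arriving at abscissa x gets a position P x in its flow,
   and consecutive positions are associated at the vertex between them.  We view
   a trace as the graph x |-> T x of a lattice path over an interval [u, v].

   The labelled edges arriving at abscissa x are ordered lexicographically by
   their height T (x-1) + T x, then by their position ("key order").  The four
   association rules are monotone, so if one labelled path dominates another in
   key order on the edges arriving at a vertex column, it still does on the edges
   leaving it (at distinct vertices the heights alone decide).  By induction along
   the common abscissa interval the key order holds on every common edge, whence
   the heights are ordered pointwise.  Since the key order is total at the first
   common edge, one trace lies weakly above the other; traces with at most one
   common abscissa are compared directly. *)

Definition conserved_at (eta : edge -> R) (y : point) : Prop :=
  eta (e_nw y) + eta (e_ne y) = eta (e_sw y) + eta (e_se y).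

Lemma e_sw_neq_e_se (y : point) : e_sw y <> e_se y.
Proof. destruct y as [t x]; unfold e_sw, e_se; simpl; intro H; injection H; lia. Qed.

Lemma e_nw_neq_e_ne (y : point) : e_nw y <> e_ne y.
Proof. destruct y as [t x]; unfold e_nw, e_ne; simpl; intro H; injection H; lia. Qed.

Ltac distinct_edges :=
  match goal with
  | H : e_sw ?y = e_se ?y |- _ => exfalso; exact (e_sw_neq_e_se y H)
  | H : e_se ?y = e_sw ?y |- _ => exfalso; exact (e_sw_neq_e_se y (eq_sym H))
  | H : e_nw ?y = e_ne ?y |- _ => exfalso; exact (e_nw_neq_e_ne y H)
  | H : e_ne ?y = e_nw ?y |- _ => exfalso; exact (e_nw_neq_e_ne y (eq_sym H))
  end.

Lemma assoc_sw_nw (eta : edge -> R) (y : point) (p q : R) :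
  assoc eta y (e_sw y) p (e_nw y) q ->
  q = p /\ 0 < p /\ p <= eta (e_nw y) /\ p <= eta (e_sw y).
Proof.
  intros [_ [Hp [_ [Hq H]]]].
  destruct H as [[_ [_ [Hmin Heq]]] | [[E _] | [[_ [E _]] | [E _]]]]; try distinct_edges.
  pose proof (Rmin_l (eta (e_sw y)) (eta (e_nw y))).
  pose proof (Rmin_r (eta (e_sw y)) (eta (e_nw y))).
  repeat split; lra.
Qed.

Lemma assoc_sw_ne (eta : edge -> R) (y : point) (p q : R) :
  assoc eta y (e_sw y) p (e_ne y) q ->
  p > eta (e_nw y) /\ q = p - eta (e_nw y) /\ p <= eta (e_sw y) /\ 0 < q.
Proof.
  intros [_ [Hp [_ [Hq H]]]].
  destruct H as [[_ [E _]] | [[E _] | [[_ [_ [H1 H2]]] | [E _]]]]; try distinct_edges.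
  repeat split; lra.
Qed.

Lemma assoc_se_nw (eta : edge -> R) (y : point) (p q : R) :
  assoc eta y (e_se y) p (e_nw y) q ->
  q > eta (e_sw y) /\ p = q - eta (e_sw y) /\ q <= eta (e_nw y) /\ 0 < p.
Proof.
  intros [_ [Hp [_ [Hq H]]]].
  destruct H as [[E _] | [[_ [_ [H1 H2]]] | [[E _] | [_ [E _]]]]]; try distinct_edges.
  repeat split; lra.
Qed.

Lemma assoc_se_ne (eta : edge -> R) (y : point) (p q : R) :
  assoc eta y (e_se y) p (e_ne y) q ->
  p > eta (e_se y) - birth eta y /\ q > eta (e_ne y) - birth eta y /\
  eta (e_se y) - p = eta (e_ne y) - q /\ p <= eta (e_se y) /\ q <= eta (e_ne y).
Proof.
  intros [_ [Hp [_ [Hq H]]]].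
  destruct H as [[E _] | [[_ [E _]] | [[E _] | [_ [_ [H1 [H2 H3]]]]]]]; try distinct_edges.
  repeat split; lra.
Qed.

Lemma mkedge_sw (m x : Z) : mkedge ((m-1)%Z, (x-1)%Z) (m, x) = e_sw (m, x).
Proof. unfold mkedge, e_sw; simpl. rewrite (proj2 (Z.ltb_lt _ _)) by lia. reflexivity. Qed.

Lemma mkedge_se (m x : Z) : mkedge ((m+1)%Z, (x-1)%Z) (m, x) = e_se (m, x).
Proof. unfold mkedge, e_se; simpl. rewrite (proj2 (Z.ltb_ge _ _)) by lia. reflexivity. Qed.

Lemma mkedge_ne (m x : Z) : mkedge (m, x) ((m+1)%Z, (x+1)%Z) = e_ne (m, x).
Proof. unfold mkedge, e_ne; simpl. rewrite (proj2 (Z.ltb_lt _ _)) by lia. reflexivity. Qed.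

Lemma mkedge_nw (m x : Z) : mkedge (m, x) ((m-1)%Z, (x+1)%Z) = e_nw (m, x).
Proof. unfold mkedge, e_nw; simpl. rewrite (proj2 (Z.ltb_ge _ _)) by lia. reflexivity. Qed.

(* Key order on labelled edges of one column: [s] is the height of an edge (the
   sum of the times of its endpoints) and [p] its label; higher edges are larger,
   and on a common edge the larger label is larger. *)
Definition key_ge (s : Z) (p : R) (s' : Z) (q : R) : Prop :=
  (s' < s)%Z \/ (s = s' /\ q <= p).

Lemma key_ge_total (s : Z) (p : R) (s' : Z) (q : R) : key_ge s p s' q \/ key_ge s' q s p.
Proof.
  unfold key_ge. destruct (Z.lt_trichotomy s s') as [H|[H|H]].
  - right; left; exact H.
  - destruct (Rle_or_lt p q); [right|left]; right; split; auto; lra.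
  - left; left; exact H.
Qed.

(* This is a check of the sixteen combinations of
   rules, using conservation of flow at the vertex. *)
Lemma key_ge_through_vertex (eta : edge -> R) (m x a r a' r' : Z) (p1 p2 q1 q2 : R) :
  conserved_at eta (m, x) ->
  (a = m + 1 \/ a = m - 1)%Z -> (r = m + 1 \/ r = m - 1)%Z ->
  (a' = m + 1 \/ a' = m - 1)%Z -> (r' = m + 1 \/ r' = m - 1)%Z ->
  assoc eta (m, x) (mkedge (a, (x-1)%Z) (m, x)) p1 (mkedge (m, x) (r, (x+1)%Z)) p2 ->
  assoc eta (m, x) (mkedge (a', (x-1)%Z) (m, x)) q1 (mkedge (m, x) (r', (x+1)%Z)) q2 ->
  key_ge (a + m) p1 (a' + m) q1 -> key_ge (m + r) p2 (m + r') q2.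
Proof.
  unfold conserved_at. intros C Ha Hr Ha' Hr' A A' K.
  assert (Hb1 : birth eta (m, x) <= eta (e_ne (m, x))) by apply Rmin_l.
  assert (Hb2 : birth eta (m, x) <= eta (e_se (m, x))) by apply Rmin_r.
  destruct Ha as [-> | ->]; destruct Hr as [-> | ->];
  destruct Ha' as [-> | ->]; destruct Hr' as [-> | ->];
  rewrite ?mkedge_sw, ?mkedge_se, ?mkedge_ne, ?mkedge_nw in A;
  rewrite ?mkedge_sw, ?mkedge_se, ?mkedge_ne, ?mkedge_nw in A';
  first [ apply assoc_sw_nw in A | apply assoc_sw_ne in A
        | apply assoc_se_nw in A | apply assoc_se_ne in A ];
  first [ apply assoc_sw_nw in A' | apply assoc_sw_ne in A'
        | apply assoc_se_nw in A' | apply assoc_se_ne in A' ];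
  decompose [and] A; decompose [and] A';
  destruct K as [K | [K1 K2]];
  first [ exfalso; lia | left; lia | right; split; [lia | lra] | exfalso; lra ].
Qed.

(* Propagation of the key order across a column x: at the same vertex by the
   previous lemma; at vertices of times m, m' of equal parity the key order of
   the arriving edges forces m > m', and then the leaving edges are ordered by
   height. *)
Lemma key_ge_across_column (eta : edge -> R) (m m' x a r a' r' : Z) (p1 p2 q1 q2 : R) :
  conserved_at eta (m, x) ->
  Z.Even (m + x) -> Z.Even (m' + x) ->
  (a = m + 1 \/ a = m - 1)%Z -> (r = m + 1 \/ r = m - 1)%Z ->
  (a' = m' + 1 \/ a' = m' - 1)%Z -> (r' = m' + 1 \/ r' = m' - 1)%Z ->
  assoc eta (m, x) (mkedge (a, (x-1)%Z) (m, x)) p1 (mkedge (m, x) (r, (x+1)%Z)) p2 ->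
  assoc eta (m', x) (mkedge (a', (x-1)%Z) (m', x)) q1 (mkedge (m', x) (r', (x+1)%Z)) q2 ->
  key_ge (a + m) p1 (a' + m') q1 -> key_ge (m + r) p2 (m' + r') q2.
Proof.
  intros C [k Hk] [k' Hk'] Ha Hr Ha' Hr' A A' K.
  destruct (Z.lt_trichotomy m m') as [Hlt | [<- | Hgt]].
  - exfalso. destruct K as [K | [K _]]; lia.
  - exact (key_ge_through_vertex eta m x a r a' r' p1 p2 q1 q2 C Ha Hr Ha' Hr' A A' K).
  - left. lia.
Qed.

(* A labelled lattice path over [u, v]: the graph of [T], with label [P x] on the
   edge arriving at abscissa x, flow conserved at the interior vertices and
   consecutive labels associated there. *)
Definition labelled_path (eta : edge -> R) (T : Z -> Z) (P : Z -> R) (u v : Z) : Prop :=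
  (u < v)%Z /\
  (forall x, (u <= x <= v)%Z -> Z.Even (T x + x)) /\
  (forall x, (u <= x < v)%Z -> T (x+1)%Z = (T x + 1)%Z \/ T (x+1)%Z = (T x - 1)%Z) /\
  (forall x, (u < x < v)%Z -> conserved_at eta (T x, x)) /\
  (forall x, (u < x < v)%Z ->
     assoc eta (T x, x) (mkedge (T (x-1)%Z, (x-1)%Z) (T x, x)) (P x)
           (mkedge (T x, x) (T (x+1)%Z, (x+1)%Z)) (P (x+1)%Z)).

Definition key_ge_at (T : Z -> Z) (P : Z -> R) (T' : Z -> Z) (P' : Z -> R) (x : Z) : Prop :=
  key_ge (T (x-1)%Z + T x) (P x) (T' (x-1)%Z + T' x) (P' x).

Lemma labelled_path_step_back (eta : edge -> R) (T : Z -> Z) (P : Z -> R) (u v x : Z) :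
  labelled_path eta T P u v -> (u < x <= v)%Z ->
  (T (x-1) = T x + 1 \/ T (x-1) = T x - 1)%Z.
Proof.
  intros [_ [_ [Step _]]] Hx.
  pose proof (Step (x-1)%Z ltac:(lia)) as S1. replace (x-1+1)%Z with x in S1 by lia. lia.
Qed.

Section TwoLabelledPaths.

Variable eta : edge -> R.
Variables (T T' : Z -> Z) (P P' : Z -> R) (u v u' v' : Z).
Hypothesis G : labelled_path eta T P u v.
Hypothesis G' : labelled_path eta T' P' u' v'.

Lemma key_ge_at_succ (x : Z) :
  (u < x < v)%Z -> (u' < x < v')%Z ->
  key_ge_at T P T' P' x -> key_ge_at T P T' P' (x+1).
Proof.
  intros H H' Kx. unfold key_ge_at in *. replace (x + 1 - 1)%Z with x by lia.
  destruct G as [_ [Par [Step [Cons Assoc]]]].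
  destruct G' as [_ [Par' [Step' [_ Assoc']]]].
  apply (key_ge_across_column eta (T x) (T' x) x (T (x-1)%Z) (T (x+1)%Z)
           (T' (x-1)%Z) (T' (x+1)%Z) (P x) (P (x+1)%Z) (P' x) (P' (x+1)%Z)).
  - apply Cons; lia.
  - apply Par; lia.
  - apply Par'; lia.
  - apply (labelled_path_step_back eta T P u v); auto; lia.
  - apply Step; lia.
  - apply (labelled_path_step_back eta T' P' u' v'); auto; lia.
  - apply Step'; lia.
  - apply Assoc; lia.
  - apply Assoc'; lia.
  - exact Kx.
Qed.

Lemma key_ge_at_forward (x1 : Z) :
  (u < x1)%Z -> (u' < x1)%Z -> key_ge_at T P T' P' x1 ->
  forall y, (x1 <= y <= Z.min v v')%Z -> key_ge_at T P T' P' y.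
Proof.
  intros H1 H1' K1 y Hy.
  replace y with (x1 + (y - x1))%Z by lia.
  assert (Hd : (0 <= y - x1)%Z) by lia.
  assert (Hb : (x1 + (y - x1) <= Z.min v v')%Z) by lia.
  revert Hb. pattern (y - x1)%Z. apply natlike_ind; [| | exact Hd].
  - intros _. replace (x1 + 0)%Z with x1 by lia. exact K1.
  - intros n Hn IH Hb. replace (x1 + Z.succ n)%Z with (x1 + n + 1)%Z by lia.
    apply key_ge_at_succ; [lia | lia |]. apply IH. lia.
Qed.

(* The key order on the edges arriving at x orders the heights at both ends,
   the parity of the paths excluding a crossing within the edge. *)
Lemma key_ge_at_heights (x : Z) :
  (u < x <= v)%Z -> (u' < x <= v')%Z ->
  key_ge_at T P T' P' x -> (T' (x-1) <= T (x-1))%Z /\ (T' x <= T x)%Z.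
Proof.
  intros Hx Hx' Kx.
  pose proof (labelled_path_step_back eta T P u v x G Hx) as S1.
  pose proof (labelled_path_step_back eta T' P' u' v' x G' Hx') as S2.
  destruct G as [_ [Par _]]. destruct G' as [_ [Par' _]].
  destruct (Par (x-1)%Z ltac:(lia)) as [k Hk].
  destruct (Par' (x-1)%Z ltac:(lia)) as [k' Hk'].
  assert (T' (x-1) + T' x <= T (x-1) + T x)%Z
    by (unfold key_ge_at, key_ge in Kx; destruct Kx as [Kx | [Kx _]]; lia).
  destruct S1 as [E1 | E1]; destruct S2 as [E2 | E2]; rewrite E1, E2 in *; lia.
Qed.

Lemma labelled_path_above :
  (Z.max u u' < Z.min v v')%Z -> key_ge_at T P T' P' (Z.max u u' + 1) ->
  forall x, (Z.max u u' <= x <= Z.min v v')%Z -> (T' x <= T x)%Z.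
Proof.
  intros Hlt K1 x Hx.
  pose proof (key_ge_at_forward (Z.max u u' + 1)) as Fwd.
  destruct (Z.eq_dec x (Z.max u u')) as [-> | Hne].
  - destruct (key_ge_at_heights (Z.max u u' + 1)) as [B _]; try lia.
    + apply Fwd; auto; lia.
    + replace (Z.max u u' + 1 - 1)%Z with (Z.max u u') in B by lia. exact B.
  - apply (key_ge_at_heights x); try lia. apply Fwd; auto; lia.
Qed.

End TwoLabelledPaths.

Lemma labelled_paths_comparable (eta : edge -> R) (T T' : Z -> Z) (P P' : Z -> R)
  (u v u' v' : Z) :
  labelled_path eta T P u v -> labelled_path eta T' P' u' v' ->
  (forall x, (u <= x <= v)%Z -> (u' <= x <= v')%Z -> (T' x <= T x)%Z) \/
  (forall x, (u <= x <= v)%Z -> (u' <= x <= v')%Z -> (T x <= T' x)%Z).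
Proof.
  intros G G'.
  destruct (Z_lt_ge_dec (Z.max u u') (Z.min v v')) as [Hlt | Hge].
  - set (x1 := (Z.max u u' + 1)%Z).
    destruct (key_ge_total (T (x1-1)%Z + T x1) (P x1) (T' (x1-1)%Z + T' x1) (P' x1))
      as [K1 | K1].
    + left. intros x Hx Hx'.
      apply (labelled_path_above eta T T' P P' u v u' v' G G' Hlt K1). lia.
    + right. intros x Hx Hx'.
      rewrite Z.max_comm, Z.min_comm in Hlt. unfold x1 in K1. rewrite Z.max_comm in K1.
      apply (labelled_path_above eta T' T P' P u' v' u v G' G Hlt K1). lia.
  - destruct (Z_le_gt_dec (T' (Z.max u u')) (T (Z.max u u'))) as [Hc | Hc];
      [left | right]; intros x Hx Hx';
      replace x with (Z.max u u') by lia; lia.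
Qed.

Lemma t_at_vert (l : trace) (i : nat) : t_at l (tr_x0 l + Z.of_nat i) = tr_t l i.
Proof.
  unfold t_at. replace (tr_x0 l + Z.of_nat i - tr_x0 l)%Z with (Z.of_nat i) by lia.
  rewrite Nat2Z.id. reflexivity.
Qed.

Lemma vert_as_graph (l : trace) (i : nat) :
  vert l i = (t_at l (tr_x0 l + Z.of_nat i), (tr_x0 l + Z.of_nat i)%Z).
Proof. unfold vert. rewrite t_at_vert. reflexivity. Qed.

Lemma abscissa_offset (x0 x : Z) : (x0 <= x)%Z -> exists i, x = (x0 + Z.of_nat i)%Z.
Proof. intros H. exists (Z.to_nat (x - x0)). rewrite Z2Nat.id; lia. Qed.

Lemma labelled_path_of_weight_point (Dom : point -> Prop) (eta : edge -> R) (l : trace)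
  (p1 : R) :
  is_trace l -> trace_in Dom l -> flow_field Dom eta -> weight_set eta l p1 ->
  exists P, labelled_path eta (t_at l) P (tr_x0 l) (tr_x0 l + Z.of_nat (tr_n l)).
Proof.
  intros [Hn [Hlat Hstep]] [_ [_ [Hinner _]]] [_ Hcons] [_ [p [_ [_ Hassoc]]]].
  set (x0 := tr_x0 l).
  exists (fun x => p (Z.to_nat (x - x0))).
  assert (Hlabel : forall i, p (Z.to_nat (x0 + Z.of_nat i - x0)) = p i).
  { intro i. replace (x0 + Z.of_nat i - x0)%Z with (Z.of_nat i) by lia.
    rewrite Nat2Z.id. reflexivity. }
  split; [lia | split; [| split; [| split]]];
    intros x Hx; destruct (abscissa_offset x0 x ltac:(lia)) as [i ->].
  - pose proof (Hlat i ltac:(lia)) as L. unfold in_lattice in L.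
    rewrite vert_as_graph in L. exact L.
  - replace (x0 + Z.of_nat i + 1)%Z with (x0 + Z.of_nat (S i))%Z by lia.
    unfold x0. rewrite !t_at_vert. pose proof (Hstep i ltac:(lia)). lia.
  - unfold conserved_at. apply Hcons. rewrite <- vert_as_graph. apply Hinner. lia.
  - pose proof (Hassoc (S i) ltac:(lia)) as A.
    unfold tr_edge in A. replace (S i - 1)%nat with i in A by lia.
    replace (x0 + Z.of_nat i + 1)%Z with (x0 + Z.of_nat (S i))%Z by lia.
    replace (x0 + Z.of_nat i - 1)%Z with (x0 + Z.of_nat (i - 1))%Z by lia.
    rewrite !Hlabel. unfold x0. rewrite <- !vert_as_graph. exact A.
Qed.

(* A set of positive outer measure is nonempty: otherwise the empty cover
   by degenerate intervals would have total length zero. *)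
Lemma positive_measure_nonempty (A : R -> Prop) : positive_measure A -> exists p, A p.
Proof.
  intros [eps [Heps Hcover]]. apply NNPP. intro Hempty.
  destruct (Hcover (fun _ => 0) (fun _ => 0)) as [N HN].
  - intros; lra.
  - intros x Ax. exfalso. apply Hempty. exists x. exact Ax.
  - assert (Hzero : forall M, sum_f_R0 (fun _ => 0 - 0) M = 0).
    { induction M as [|M IH]; cbn [sum_f_R0]; [lra | rewrite IH; lra]. }
    rewrite Hzero in HN. lra.
Qed.

Lemma trace_ge_of_pointwise (l l' : trace) :
  (forall x, dom l x -> dom l' x -> (t_at l' x <= t_at l x)%Z) ->
  (exists x, dom l x /\ dom l' x) -> trace_ge l l'.
Proof.
  intros Hle [x [Hx Hx']]. split; [exact Hle |].
  exists x, x. auto.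
Qed.

Lemma disjoint_traces_comparable (l l' : trace) :
  ~ (exists x, dom l x /\ dom l' x) -> trace_ge l l' \/ trace_ge l' l.
Proof.
  intros Hdisj.
  assert (Hstart : forall k, dom k (tr_x0 k)) by (intro k; unfold dom; lia).
  destruct (Z_le_gt_dec (t_at l' (tr_x0 l')) (t_at l (tr_x0 l))) as [Hc | Hc];
    [left | right]; split.
  - intros x Hx Hx'. exfalso. eauto.
  - exists (tr_x0 l), (tr_x0 l'). auto.
  - intros x Hx Hx'. exfalso. eauto.
  - exists (tr_x0 l'), (tr_x0 l). repeat split; auto; lia.
Qed.

Theorem mainTheorem8 (a b c d : Z) (eta : edge -> R) (l l' : trace) :
  Z.Even a -> Z.Even b -> Z.Even c -> Z.Even d ->
  (a <= b)%Z -> (c <= d)%Z ->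
  flow_field (rect_dom a b c d) eta ->
  is_trace l -> is_trace l' ->
  trace_in (rect_dom a b c d) l -> trace_in (rect_dom a b c d) l' ->
  positive_measure (weight_set eta l) ->
  positive_measure (weight_set eta l') ->
  trace_ge l l' \/ trace_ge l' l.
Proof.
  intros _ _ _ _ _ _ Hflow Hl Hl' Hin Hin' Hw Hw'.
  destruct (positive_measure_nonempty _ Hw) as [p1 Hp1].
  destruct (positive_measure_nonempty _ Hw') as [p1' Hp1'].
  destruct (labelled_path_of_weight_point _ _ _ _ Hl Hin Hflow Hp1) as [P G].
  destruct (labelled_path_of_weight_point _ _ _ _ Hl' Hin' Hflow Hp1') as [P' G'].
  destruct (classic (exists x, dom l x /\ dom l' x)) as [Hcommon | Hdisj].
  - destruct (labelled_paths_comparable _ _ _ _ _ _ _ _ _ G G') as [Hle | Hle].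
    + left. apply trace_ge_of_pointwise; [exact Hle | exact Hcommon].
    + right. apply trace_ge_of_pointwise.
      * intros x Hx' Hx. exact (Hle x Hx Hx').
      * destruct Hcommon as [x [Hx Hx']]. eauto.
  - exact (disjoint_traces_comparable l l' Hdisj).
Qed.
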